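(* For an $M$-memory $(T(n),IO(n))$-time $S(n)$-space RATM-TLM $\mathcal M$, a RATM-BIO $\mathcal M'$ can simulate $\mathcal M$ with $O(IO(n)\cdot S(n))$ external access trace complexity.
   Context: A RATM-TLM with main memory size $M$ has a main memory tape of $M$ cells with random access (a main-memory address tape and a random access state $q_a$; entering $q_a$ moves the main head in one step to the cell whose index is on that address tape), an unbounded external memory tape and an external address tape; it has read and write states: on entering a read state an address $addr$ is written on the external address tape and the main memory cell under the head receives the content of external cell $addr$; a write state does the reverse. Each Read/Write is one unit-cost IO operation. Time = number of transitions other than Read/Write; IO time = number of Read/Write; space = number of external cells used; an $M$-memory $(T(n),IO(n))$-time $S(n)$-space machine has main memory size $M$ and time, IO, space complexities $O(T(n))$, $O(IO(n))$, $O(S(n))$. A RATM-BIO (random access Turing machine with blocking IO) has four tapes: a main memory tape with its address tape, and an external memory tape with its address tape; a main head with random access on the main tape and an external head that moves only one cell at a time on the external tape. Its transitions are main memory computation transitions (main head moves, external head halts), external memory access transitions (external head moves one step, main head halts), and read/write transitions: on entering a read (write) state an external address is written, the main head halts and the external head moves step by step to the designated external cell; when reached, the content of that cell replaces (is replaced by) the content of the main memory cell under the main head, and main memory computation resumes. The external access trace complexity is the total number of moves of the external head. *)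

From mathcomp Require Import all_boot.
Unset Printing Implicit Defensive.

Inductive dir := DL | DS | DR.

(* move on a one-way infinite tape (cells 0,1,2,...); moving left at 0 stays *)
Definition mv (d : dir) (h : nat) : nat :=
  match d with DL => h.-1 | DS => h | DR => h.+1 end.

Definition mv_bounded (M : nat) (d : dir) (h : nat) : nat :=
  if mv d h < M then mv d h else h.

(* Tapes are represented by finite sequences implicitly padded with blanks:
   reading cell i is [nth blank s i], writing is [set_nth blank s i a]. *)

(* An address written on an address tape: binary numeral, least significant
   digit in cell 0, terminated by the first non-digit symbol (e.g. blank). *)
Definition decode {Sym : Type} (digit : Sym -> option bool) (s : seq Sym) : nat :=
  foldr (fun a acc => if digit a is Some b then b + acc.*2 else 0) 0 s.

Inductive tkind := TNormal | TRandAcc | TRead | TWrite | TAccept | TReject.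

Record TLM := {
  t_state : finType;
  t_sym : finType;
  t_blank : t_sym;
  t_inp : bool -> t_sym;
  t_inp_inj : injective t_inp;
  t_inp_blank : forall b, t_inp b != t_blank;
  t_digit : t_sym -> option bool;
  t_digit_blank : t_digit t_blank = None;
  t_msize : nat;
  t_start : t_state;
  t_kind : t_state -> tkind;
  (* ordinary transition: (state, main cell, main-address cell, ext-address cell)
     -> (new state, writes on these three tapes, moves of their three heads) *)
  t_delta : t_state -> t_sym -> t_sym -> t_sym ->
            t_state * t_sym * t_sym * t_sym * dir * dir * dir;
  (* successor state after a random access / read / write operation *)
  t_next : t_state -> t_state
}.

Record tconf (M : TLM) := TConf {
  tc_st : t_state M;
  tc_mem : seq (t_sym M);  tc_mh : nat;
  tc_mat : seq (t_sym M);  tc_mah : nat;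
  tc_ext : seq (t_sym M);
  tc_eat : seq (t_sym M);  tc_eah : nat
}.
Arguments TConf {M}.
Arguments tc_st {M}.

(* one step; label [None] = ordinary transition (time), [Some a] = one IO on
   external cell a; [None] result = halted *)
Definition tstep {M : TLM} (c : tconf M) : option (tconf M * option nat) :=
  let: TConf q mem mh mat mah ext eat eah := c in
  let b := t_blank M in
  match t_kind M q with
  | TAccept | TReject => None
  | TNormal =>
      let: (q', a1, a2, a3, d1, d2, d3) :=
         t_delta M q (nth b mem mh) (nth b mat mah) (nth b eat eah) in
      Some (TConf q' (set_nth b mem mh a1) (mv_bounded (t_msize M) d1 mh)
                     (set_nth b mat mah a2) (mv d2 mah) ext
                     (set_nth b eat eah a3) (mv d3 eah), None)
  | TRandAcc =>
      let a := decode (t_digit M) mat in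
      Some (TConf (t_next M q) mem (if a < t_msize M then a else mh)
                  mat mah ext eat eah, None)
  | TRead =>
      let a := decode (t_digit M) eat in
      Some (TConf (t_next M q) (set_nth b mem mh (nth b ext a)) mh
                  mat mah ext eat eah, Some a)
  | TWrite =>
      let a := decode (t_digit M) eat in
      Some (TConf (t_next M q) mem mh mat mah (set_nth b ext a (nth b mem mh))
                  eat eah, Some a)
  end.

Fixpoint trun {M : TLM} (k : nat) (c : tconf M) : tconf M * seq (option nat) :=
  if k is k'.+1 then
    if tstep c is Some (c', l) then let: (cf, ls) := trun k' c' in (cf, l :: ls)
    else (c, [::])
  else (c, [::]).

Definition tinit (M : TLM) (w : seq bool) : tconf M :=
  TConf (t_start M) (nseq (t_msize M) (t_blank M)) 0 [::] 0
        (map (t_inp M) w) [::] 0.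

Definition t_result (M : TLM) (w : seq bool) (ls : seq (option nat)) (acc : bool) :=
  exists k, let: (c, ls') := trun k (tinit M w) in
    ls' = ls /\ t_kind M (tc_st c) = (if acc then TAccept else TReject).

Definition t_time (ls : seq (option nat)) : nat := count (fun l => l == None) ls.
Definition t_io (ls : seq (option nat)) : nat := count (fun l => l != None) ls.
Definition t_space (ls : seq (option nat)) : nat := foldr maxn 0 (map S (pmap id ls)).

Definition TLM_bounded (M : TLM) (Mm : nat) (T IO S : nat -> nat) : Prop :=
  t_msize M = Mm /\
  (forall w, exists ls acc, t_result M w ls acc) /\
  exists c N, forall w ls acc, N <= size w -> t_result M w ls acc ->
    [/\ t_time ls <= c * T (size w), t_io ls <= c * IO (size w)
      & t_space ls <= c * S (size w)].

Inductive bkind := BMain | BExt | BRandAcc | BRead | BWrite | BAccept | BReject.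

Record BIO := {
  b_state : finType;
  b_sym : finType;
  b_blank : b_sym;
  b_inp : bool -> b_sym;
  b_inp_inj : injective b_inp;
  b_inp_blank : forall b, b_inp b != b_blank;
  b_digit : b_sym -> option bool;
  b_digit_blank : b_digit b_blank = None;
  b_msize : nat;
  b_start : b_state;
  b_kind : b_state -> bkind;
  b_delta : b_state -> b_sym -> b_sym -> b_sym ->
            b_state * b_sym * b_sym * b_sym * dir * dir * dir;
  (* external memory access transition: (state, external cell under external
     head, main cell under main head) -> (state, write on external cell,
     external head move by at most one cell); main head halts *)
  b_ext : b_state -> b_sym -> b_sym -> b_state * b_sym * dir;
  b_next : b_state -> b_state
}.

Record bconf (M : BIO) := BConf {
  bc_st : b_state M;
  bc_mem : seq (b_sym M);  bc_mh : nat;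
  bc_mat : seq (b_sym M);  bc_mah : nat;
  bc_ext : seq (b_sym M);  bc_eh : nat;
  bc_eat : seq (b_sym M);  bc_eah : nat
}.
Arguments BConf {M}.
Arguments bc_st {M}.

(* label = number of moves of the external head during the step;
   a read/write walks the external head cell by cell to the address *)
Definition bstep {M : BIO} (c : bconf M) : option (bconf M * nat) :=
  let: BConf q mem mh mat mah ext eh eat eah := c in
  let b := b_blank M in
  match b_kind M q with
  | BAccept | BReject => None
  | BMain =>
      let: (q', a1, a2, a3, d1, d2, d3) :=
         b_delta M q (nth b mem mh) (nth b mat mah) (nth b eat eah) in
      Some (BConf q' (set_nth b mem mh a1) (mv_bounded (b_msize M) d1 mh)
                     (set_nth b mat mah a2) (mv d2 mah) ext eh
                     (set_nth b eat eah a3) (mv d3 eah), 0)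
  | BExt =>
      let: (q', a, d) := b_ext M q (nth b ext eh) (nth b mem mh) in
      let eh' := mv d eh in
      Some (BConf q' mem mh mat mah (set_nth b ext eh a) eh' eat eah,
            (eh' - eh) + (eh - eh'))
  | BRandAcc =>
      let a := decode (b_digit M) mat in
      Some (BConf (b_next M q) mem (if a < b_msize M then a else mh)
                  mat mah ext eh eat eah, 0)
  | BRead =>
      let a := decode (b_digit M) eat in
      Some (BConf (b_next M q) (set_nth b mem mh (nth b ext a)) mh
                  mat mah ext a eat eah, (a - eh) + (eh - a))
  | BWrite =>
      let a := decode (b_digit M) eat in
      Some (BConf (b_next M q) mem mh mat mah (set_nth b ext a (nth b mem mh)) a
                  eat eah, (a - eh) + (eh - a))
  end.

Fixpoint brun {M : BIO} (k : nat) (c : bconf M) : bconf M * seq nat :=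
  if k is k'.+1 then
    if bstep c is Some (c', l) then let: (cf, ls) := brun k' c' in (cf, l :: ls)
    else (c, [::])
  else (c, [::]).

Definition binit (M : BIO) (w : seq bool) : bconf M :=
  BConf (b_start M) (nseq (b_msize M) (b_blank M)) 0 [::] 0
        (map (b_inp M) w) 0 [::] 0.

Definition b_result (M : BIO) (w : seq bool) (ls : seq nat) (acc : bool) :=
  exists k, let: (c, ls') := brun k (binit M w) in
    ls' = ls /\ b_kind M (bc_st c) = (if acc then BAccept else BReject).

Definition b_trace (ls : seq nat) : nat := sumn ls.

Definition simulates (M' : BIO) (M : TLM) : Prop :=
  forall w ls acc, t_result M w ls acc -> exists ls', b_result M' w ls' acc.

Definition trace_bigO (M' : BIO) (f : nat -> nat) : Prop :=
  exists c N, forall w ls acc, N <= size w -> b_result M' w ls acc ->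
    b_trace ls <= c * f (size w).

From mathcomp Require Import all_boot.
From mathcomp Require Import zify.

(* The RATM-BIO runs the RATM-TLM's program verbatim; only its external head
   has to walk to each accessed address.  That head always rests on the last
   accessed cell, so each IO costs the distance between two cells below the
   space bound S, i.e. at most S moves, and there are at most IO accesses. *)

Definition bkind_of_tkind (k : tkind) : bkind :=
  match k with
  | TNormal => BMain | TRandAcc => BRandAcc | TRead => BRead
  | TWrite => BWrite | TAccept => BAccept | TReject => BReject
  end.

Lemma bkind_of_tkind_final k (acc : bool) :
  bkind_of_tkind k = (if acc then BAccept else BReject) ->
  k = (if acc then TAccept else TReject).
Proof. by case: k; case: acc. Qed.

Fixpoint bio_labels (eh : nat) (ls : seq (option nat)) : seq nat :=
  match ls with
  | [::] => [::]
  | None :: ls' => 0 :: bio_labels eh ls'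
  | Some a :: ls' => (a - eh) + (eh - a) :: bio_labels a ls'
  end.

Lemma sumn_bio_labels eh ls :
  sumn (bio_labels eh ls) <= t_io ls * maxn eh (t_space ls).
Proof.
elim: ls eh => [|[a|] ls IH] eh //=; rewrite /t_io /t_space /= -/(t_io ls).
- rewrite -/(t_space ls) mulSn; apply: leq_add; first lia.
  apply: leq_trans (IH a) _; apply: leq_mul => //; lia.
- exact: IH.
Qed.

Section Simulation.
Variable M : TLM.

(* [b_ext] is irrelevant: no state of the simulator has kind [BExt]. *)
Definition bio_of_tlm : BIO := {|
  b_state := t_state M; b_sym := t_sym M; b_blank := t_blank M;
  b_inp := t_inp M; b_inp_inj := t_inp_inj M; b_inp_blank := t_inp_blank M;
  b_digit := t_digit M; b_digit_blank := t_digit_blank M;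
  b_msize := t_msize M; b_start := t_start M;
  b_kind := fun q => bkind_of_tkind (t_kind M q);
  b_delta := t_delta M;
  b_ext := fun q a _ => (q, a, DS);
  b_next := t_next M |}.

Definition bconf_of_tconf (c : tconf M) (eh : nat) : bconf bio_of_tlm :=
  let: TConf q mem mh mat mah ext eat eah := c in
  @BConf bio_of_tlm q mem mh mat mah ext eh eat eah.

Lemma bc_st_bconf_of_tconf c eh : bc_st (bconf_of_tconf c eh) = tc_st c.
Proof. by case: c. Qed.

Lemma binit_bio_of_tlm w : binit bio_of_tlm w = bconf_of_tconf (tinit M w) 0.
Proof. by []. Qed.

Lemma bstep_bconf_of_tconf c eh :
  bstep (bconf_of_tconf c eh) =
  match tstep c with
  | None => None
  | Some (c', None) => Some (bconf_of_tconf c' eh, 0)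
  | Some (c', Some a) => Some (bconf_of_tconf c' a, (a - eh) + (eh - a))
  end.
Proof.
case: c => q mem mh mat mah ext eat eah /=; case: (t_kind M q) => //=.
by case: (t_delta _ _ _ _ _) => [[[[[[q' a1] a2] a3] d1] d2] d3].
Qed.

Lemma brun_bconf_of_tconf k c eh :
  let: (cf, ls) := trun k c in
  exists eh', brun k (bconf_of_tconf c eh) = (bconf_of_tconf cf eh', bio_labels eh ls).
Proof.
elim: k c eh => [|k IH] c eh /=; first by exists eh.
rewrite bstep_bconf_of_tconf.
case: (tstep c) => [[c' [a|]]|]; last by exists eh.
- by have := IH c' a; case: (trun k c') => cf ls [eh' ->]; exists eh'.
- by have := IH c' eh; case: (trun k c') => cf ls [eh' ->]; exists eh'.
Qed.

Lemma b_result_bio_of_tlm w ls' acc :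
  b_result bio_of_tlm w ls' acc <->
  exists2 ls, t_result M w ls acc & ls' = bio_labels 0 ls.
Proof.
split.
- case=> k; have := brun_bconf_of_tconf k (tinit M w) 0.
  rewrite binit_bio_of_tlm; case E: (trun k (tinit M w)) => [cf ls] [eh' ->].
  case=> <-; rewrite bc_st_bconf_of_tconf => /bkind_of_tkind_final final.
  by exists ls => //; exists k; rewrite E.
- case=> ls [k Hk] ->; exists k; have := brun_bconf_of_tconf k (tinit M w) 0.
  rewrite binit_bio_of_tlm.
  case: (trun k (tinit M w)) Hk => cf _ [-> final] [eh' ->].
  by rewrite /= bc_st_bconf_of_tconf; case: acc final => /= ->.
Qed.

End Simulation.

Theorem theorem6 (M : TLM) (Mm : nat) (T IO S : nat -> nat) :
  TLM_bounded M Mm T IO S ->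
  exists M' : BIO, simulates M' M /\ trace_bigO M' (fun n => IO n * S n).
Proof.
move=> [_ [_ [c [N bounds]]]].
exists (bio_of_tlm M); split.
- move=> w ls acc run; exists (bio_labels 0 ls).
  by apply/b_result_bio_of_tlm; exists ls.
- exists (c * c), N => w ls' acc large /b_result_bio_of_tlm [ls run ->].
  have [_ io_le space_le] := bounds w ls acc large run.
  apply: leq_trans (sumn_bio_labels 0 ls) _.
  by rewrite max0n mulnACA leq_mul.
Qed.
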